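(* There exist an argumentation semantics $\sigma$ whose extensions are maximal conflict-free sets (w.r.t. set inclusion) and argumentation frameworks $AF=(AR,Attacks)$, $AF'=(AR',Attacks')$ with $AF\preceq_N AF'$ such that the following statement does NOT hold: if for all $E\in\sigma(AF)$ and all $E'\in\sigma(AF')$ we have $E'\not\subseteq AR$ or $E'=E$, then for all $E\in\sigma(AF)$ and all $E'\in\sigma(AF')$ we have $E\subseteq E'$.
   Context: An argumentation framework is a pair $(AR,Attacks)$ with $AR$ a finite set and $Attacks\subseteq AR\times AR$; $a$ attacks $b$ iff $(a,b)\in Attacks$. A set $S$ is conflict-free iff no element of $S$ attacks an element of $S$. An argumentation semantics $\sigma$ assigns to each argumentation framework a set $\sigma(AF)$ of subsets of $AR$; ''$\sigma$'s extensions are maximal conflict-free sets'' means that for every $AF$, every $E\in\sigma(AF)$ is a $\subseteq$-maximal conflict-free subset of the argument set of $AF$. $AF\preceq_N AF'$ (normal expansion) iff $AR\subseteq AR'$, $Attacks\subseteq Attacks'$ and no $(a,b)\in Attacks'\setminus Attacks$ has both $a,b\in AR$. *)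

From mathcomp Require Import all_boot.
From mathcomp Require Import finmap.
Set Implicit Arguments. Unset Strict Implicit. Unset Printing Implicit Defensive.
Local Open Scope fset_scope.

Record AF := mkAF {
  AR : {fset nat};
  Attacks : {fset (nat * nat)};
  Attacks_wf : forall a b, (a, b) \in Attacks -> (a \in AR) && (b \in AR)
}.

Definition attacks (F : AF) (a b : nat) : bool := (a, b) \in Attacks F.

Definition conflict_free (F : AF) (S : {fset nat}) : Prop :=
  forall a b, a \in S -> b \in S -> ~~ attacks F a b.

Definition maximal_conflict_free (F : AF) (S : {fset nat}) : Prop :=
  S `<=` AR F /\ conflict_free F S /\
  forall T : {fset nat}, T `<=` AR F -> conflict_free F T -> S `<=` T -> T = S.

Definition semantics := AF -> {fset nat} -> Prop.

Definition extensions_maximal_cf (sigma : semantics) : Prop :=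
  forall F E, sigma F E -> maximal_conflict_free F E.

Definition normal_expansion (F F' : AF) : Prop :=
  AR F `<=` AR F' /\ Attacks F `<=` Attacks F' /\
  forall a b, (a, b) \in Attacks F' -> (a, b) \notin Attacks F ->
    ~ ((a \in AR F) && (b \in AR F)).

From mathcomp Require Import all_boot.
From mathcomp Require Import finmap.
Set Implicit Arguments. Unset Strict Implicit.
Local Open Scope fset_scope.

(* The naive semantics itself is a witness.  Adding an argument 2 that attacks
   the lone argument 1 of an attack-free framework creates the new naive
   extension {2} and keeps the old one {1}.  Every new extension contained in
   the old arguments is the old extension, yet {1} is not included in {2}. *)

Lemma conflict_free1 (F : AF) (a : nat) :
  ~~ attacks F a a -> conflict_free F [fset a].
Proof. by move=> naa b c; rewrite !inE => /eqP -> /eqP ->. Qed.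

Lemma maximal_conflict_free_intro (F : AF) (S : {fset nat}) :
  S `<=` AR F -> conflict_free F S ->
  (forall a, a \in AR F -> a \notin S ->
     exists2 b, b \in a |` S & attacks F a b || attacks F b a) ->
  maximal_conflict_free F S.
Proof.
move=> sSAR cfS conflicting; split=> //; split=> // T sTAR cfT sST.
apply/eqP; rewrite eqEfsubset sST andbT; apply/fsubsetP => a aT.
apply/negPn/negP => naS.
have [b] := conflicting a (fsubsetP sTAR a aT) naS.
have sbT : b \in a |` S -> b \in T by rewrite !inE => /orP [/eqP -> | /(fsubsetP sST)].
move=> /sbT bT /orP [] abs.
- by have := cfT a b aT bT; rewrite abs.
- by have := cfT b a bT aT; rewrite abs.
Qed.

Lemma maximal_conflict_free_sub (F : AF) (E S : {fset nat}) :
  maximal_conflict_free F E -> E `<=` S -> S `<=` AR F -> conflict_free F S ->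
  E = S.
Proof. by move=> [_ [_ maxE]] sES sSAR cfS; rewrite (maxE S). Qed.

Lemma base_AF_wf (a b : nat) :
  (a, b) \in (fset0 : {fset nat * nat}) -> (a \in [fset 1]) && (b \in [fset 1]).
Proof. by rewrite in_fset0. Qed.

Lemma expanded_AF_wf (a b : nat) :
  (a, b) \in [fset (2, 1)] -> (a \in [fset 1; 2]) && (b \in [fset 1; 2]).
Proof. by rewrite in_fset1 => /eqP [-> ->]; rewrite !inE. Qed.

Definition base_AF : AF := mkAF base_AF_wf.
Definition expanded_AF : AF := mkAF expanded_AF_wf.

Lemma normal_expansion_base_expanded : normal_expansion base_AF expanded_AF.
Proof.
split; first by apply/fsubsetP => x; rewrite /= !inE => ->.
split; first by apply/fsubsetP => x; rewrite in_fset0.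
by move=> a b /=; rewrite in_fset1 => /eqP [-> ->] _; rewrite !inE.
Qed.

Lemma base_AF_naive1 : maximal_conflict_free base_AF [fset 1].
Proof.
apply: maximal_conflict_free_intro.
- exact: fsubset_refl.
- exact: conflict_free1.
- by move=> a /= ->.
Qed.

Lemma base_AF_naiveE (E : {fset nat}) :
  maximal_conflict_free base_AF E -> E = [fset 1].
Proof.
move=> naiveE; apply: (maximal_conflict_free_sub naiveE).
- by case: naiveE.
- exact: fsubset_refl.
- exact: conflict_free1.
Qed.

Lemma expanded_AF_naive1 : maximal_conflict_free expanded_AF [fset 1].
Proof.
apply: maximal_conflict_free_intro.
- by apply/fsubsetP => x; rewrite /= !inE => ->.
- by apply: conflict_free1; rewrite /attacks /= !inE.
- move=> a; rewrite /= !inE => /orP [-> // | /eqP ->] _.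
  by exists 1; rewrite /attacks /= !inE.
Qed.

Lemma expanded_AF_naive2 : maximal_conflict_free expanded_AF [fset 2].
Proof.
apply: maximal_conflict_free_intro.
- by apply/fsubsetP => x; rewrite /= !inE => ->; rewrite orbT.
- by apply: conflict_free1; rewrite /attacks /= !inE.
- move=> a; rewrite /= !inE => /orP [/eqP -> | /eqP -> //] _.
  by exists 2; rewrite /attacks /= !inE.
Qed.

Lemma expanded_AF_naive_in_base (E : {fset nat}) :
  maximal_conflict_free expanded_AF E -> E `<=` AR base_AF -> E = [fset 1].
Proof.
move=> naiveE sE1; apply: (maximal_conflict_free_sub naiveE sE1).
- by apply/fsubsetP => x; rewrite /= !inE => ->.
- by apply: conflict_free1; rewrite /attacks /= !inE.
Qed.

Theorem proposition51 :
  exists (sigma : semantics) (F F' : AF),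
    extensions_maximal_cf sigma /\ normal_expansion F F' /\
    ~ ((forall E E' : {fset nat}, sigma F E -> sigma F' E' ->
          ~ (E' `<=` AR F) \/ E' = E) ->
       (forall E E' : {fset nat}, sigma F E -> sigma F' E' -> E `<=` E')).
Proof.
exists maximal_conflict_free, base_AF, expanded_AF.
split=> //; split; first exact: normal_expansion_base_expanded.
have old_extensions_kept E E' : maximal_conflict_free base_AF E ->
    maximal_conflict_free expanded_AF E' -> ~ (E' `<=` AR base_AF) \/ E' = E.
  move=> /base_AF_naiveE -> naiveE'.
  have [/(expanded_AF_naive_in_base naiveE') | /negP] := boolP (E' `<=` AR base_AF).
  - by right.
  - by left.
move=> /(_ old_extensions_kept _ _ base_AF_naive1 expanded_AF_naive2).
by move=> /fsubsetP /(_ 1); rewrite !inE => /(_ isT).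
Qed.
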